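(* Let $s>0$, $Y>0$ and $\tau\geq 0$, and consider the delay differential system \[ \dot x(t)=x(t)(1-x(t))-y(t)x(t),\qquad \dot y(t)=-sy(t)+Ye^{-s\tau}y(t-\tau)x(t-\tau), \] with initial data $(x(t),y(t))=(\phi(t),\psi(t))$ for $t\in[-\tau,0]$, where $(\phi,\psi)\in X:=C([-\tau,0],\mathbb{R}_+)\times C([-\tau,0],\mathbb{R}_+)$. \begin{enumerate} \item The solutions exist, are unique, and remain nonnegative for all $t\geq 0$. \item $\limsup_{t\to\infty}x(t)\leq 1$ and $\limsup_{t\to\infty}y(t)\leq \frac{1}{4s}Ye^{-s\tau}(s+1)^2$. \item If the initial data lie in \[ X^0=\{(\phi,\psi)\in X:\ \phi(0)>0 \text{ and there exists } \theta\in[-\tau,0] \text{ with } \phi(\theta)\psi(\theta)>0\}, \] then $x(t)>0$ for all $t>0$ and there exists $T\geq 0$ such that $y(t)>0$ for all $t>T$. \end{enumerate}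
   Context: $\mathbb{R}_+=\{x\in\mathbb{R}: x\geq 0\}$. $C([-\tau,0],\mathbb{R}_+)$ is the Banach space of continuous functions $[-\tau,0]\to\mathbb{R}_+$ with the uniform norm. *)

From Stdlib Require Import Reals.
From Coquelicot Require Import Coquelicot.
Open Scope R_scope.

(* An element of C([-tau,0], R_+): continuous on [-tau,0] (within the
   interval) and nonnegative there.  Values outside [-tau,0] are irrelevant. *)
Definition nonneg_cont_on (tau : R) (phi : R -> R) : Prop :=
  (forall t, -tau <= t <= 0 ->
     filterlim phi (within (fun u => -tau <= u <= 0) (locally t)) (locally (phi t)))
  /\ (forall t, -tau <= t <= 0 -> 0 <= phi t).

Definition is_solution (s Y tau : R) (phi psi x y : R -> R) : Prop :=
  (forall t, -tau <= t <= 0 -> x t = phi t /\ y t = psi t)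
  /\ filterlim x (at_right 0) (locally (x 0))
  /\ filterlim y (at_right 0) (locally (y 0))
  /\ (forall t, 0 < t ->
        is_derive x t (x t * (1 - x t) - y t * x t)
        /\ is_derive y t (- s * y t + Y * exp (- s * tau) * y (t - tau) * x (t - tau))).

Definition in_X0 (tau : R) (phi psi : R -> R) : Prop :=
  phi 0 > 0 /\ exists th, -tau <= th <= 0 /\ phi th * psi th > 0.

(** Clipping the nonlinearities at a level [M] makes the delay system globally Lipschitz, so Picard
    iteration, in a sup norm weighted by [exp (8 L t)], yields a global solution. First-touching
    comparison arguments show that this solution stays in [[0, M]]: [x] stays below [max 1 (phi 0)],
    and [y] is controlled on [[0, tau]] by the history and afterwards by [W t = k x (t - tau) + y t]
    with [k = Y exp (- s tau)], which satisfies
    [W' = k x (t - tau) (1 + s - x (t - tau)) - s W <= k (1 + s)^2 / 4 - s W].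
    So the clipping never acts and the fixed point solves the original system. The same inequalities,
    [x' <= 1 - x] and the one for [W], give the limsup bounds, while [x' >= - C x] and [y' >= - s y]
    propagate positivity. A Gronwall argument with delay for the squared distance of two solutions
    gives uniqueness, so every solution inherits the properties of the constructed one. *)

From Stdlib Require Import Reals Lra Lia.
From Coquelicot Require Import Coquelicot.
Open Scope R_scope.

(** * Continuity, integrals and derivatives *)

Lemma continuity_identity : continuity (fun u => u).
Proof. apply derivable_continuous, derivable_id. Qed.

Lemma continuity_constant (c : R) : continuity (fun _ => c).
Proof. apply continuity_const. intros ? ?; reflexivity. Qed.

Lemma continuity_shift f a : continuity f -> continuity (fun u => f (u - a)).
Proof.
  intros Hf. apply (continuity_comp (fun u => u - a) f); [|exact Hf].
  apply continuity_minus; [apply continuity_identity | apply continuity_constant].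
Qed.

Lemma continuity_pt_of_dominated f g z :
  continuity_pt g z -> g z = 0 -> (forall u, Rabs (f u - f z) <= g u) -> continuity_pt f z.
Proof.
  intros Hg Hg0 Hfg e He. destruct (Hg e He) as [d [Hd Hu]]. exists d. split; [exact Hd|].
  intros u Hu'. specialize (Hu u Hu'). simpl in *. unfold R_dist in *. rewrite Hg0, Rminus_0_r in Hu.
  eapply Rle_lt_trans; [apply Hfg|]. eapply Rle_lt_trans; [apply Rle_abs | exact Hu].
Qed.

Lemma continuity_of_nonexpansive f : (forall u v, Rabs (f u - f v) <= Rabs (u - v)) -> continuity f.
Proof.
  intros Hf z. apply (continuity_pt_of_dominated f (fun u => Rabs (u - z))).
  - apply (continuity_pt_comp (fun u => u - z) Rabs); [|apply Rcontinuity_abs].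
    exact (continuity_shift _ z continuity_identity z).
  - rewrite Rminus_eq_0. apply Rabs_R0.
  - intros u. apply Hf.
Qed.

Lemma continuity_Rmax_0 : continuity (fun t => Rmax t 0).
Proof.
  apply continuity_of_nonexpansive. intros u v.
  unfold Rmax. repeat destruct Rle_dec; unfold Rabs; repeat destruct Rcase_abs; lra.
Qed.

Lemma continuity_pt_at_right h a :
  continuity_pt h a -> filterlim h (at_right a) (locally (h a)).
Proof.
  intros H. apply (filterlim_filter_le_1 _ (filter_le_within _)).
  apply continuity_pt_filterlim. exact H.
Qed.

Lemma continuity_at_right f : continuity f -> forall a, filterlim f (at_right a) (locally (f a)).
Proof. intros Hf a. apply continuity_pt_at_right, Hf. Qed.

Lemma at_right_minus h q a :
  filterlim h (at_right a) (locally (h a)) -> filterlim q (at_right a) (locally (q a)) ->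
  filterlim (fun u => h u - q u) (at_right a) (locally (h a - q a)).
Proof.
  intros Hh Hq. apply filterlim_locally. intros eps.
  generalize (filter_and _ _ (proj1 (filterlim_locally _ _) Hh (pos_div_2 eps))
                             (proj1 (filterlim_locally _ _) Hq (pos_div_2 eps))).
  apply filter_imp. intros u [A B].
  change (Rabs (h u - q u - (h a - q a)) < eps).
  change (Rabs (h u - h a) < eps / 2) in A. change (Rabs (q u - q a) < eps / 2) in B.
  apply Rabs_def2 in A. apply Rabs_def2 in B. apply Rabs_def1; lra.
Qed.

Lemma is_derive_continuity_pt (f : R -> R) t l : is_derive f t l -> continuity_pt f t.
Proof.
  intros H. apply continuity_pt_filterlim.
  apply (@ex_derive_continuous R_AbsRing R_NormedModule). exists l. exact H.
Qed.

Lemma ex_RInt_continuity f a b : continuity f -> ex_RInt f a b.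
Proof.
  intros H. apply (@ex_RInt_continuous R_CompleteNormedModule).
  intros z _. apply continuity_pt_filterlim, H.
Qed.

Lemma is_derive_RInt_from_0 f t : continuity f -> is_derive (fun t => RInt f 0 t) t (f t).
Proof.
  intros H. apply (is_derive_RInt f (fun t => RInt f 0 t) 0 t).
  - exists (mkposreal 1 Rlt_0_1). intros b _.
    apply (@RInt_correct R_CompleteNormedModule), ex_RInt_continuity, H.
  - apply continuity_pt_filterlim, H.
Qed.

Lemma continuity_RInt_from_0 f : continuity f -> continuity (fun t => RInt f 0 t).
Proof. intros H z. exact (is_derive_continuity_pt _ _ _ (is_derive_RInt_from_0 f z H)). Qed.

Lemma RInt_exp_from_0 D t : 0 < D -> RInt (fun u => exp (D * u)) 0 t = (exp (D * t) - 1) / D.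
Proof.
  intros HD. apply is_RInt_unique.
  replace ((exp (D * t) - 1) / D) with (minus (exp (D * t) / D) (exp (D * 0) / D))
    by (rewrite Rmult_0_r, exp_0; unfold minus, plus, opp; simpl; field; lra).
  apply (is_RInt_derive (fun u => exp (D * u) / D)).
  - intros x _. auto_derive; [exact I|]. field. lra.
  - intros x _. apply continuity_pt_filterlim.
    apply (continuity_comp (fun u => D * u) exp).
    + apply continuity_scal, continuity_identity.
    + apply derivable_continuous, derivable_exp.
Qed.

Lemma is_derive_shift (f : R -> R) t a l : is_derive f (t - a) l -> is_derive (fun u => f (u - a)) t l.
Proof.
  intros H. apply is_derive_Reals in H. apply is_derive_Reals.
  intros e He. destruct (H e He) as [d Hd]. exists d. intros h Hh Hhd.
  replace (t + h - a) with (t - a + h) by ring. apply Hd; assumption.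
Qed.

Lemma is_derive_exp_barrier K Q r a t :
  is_derive (fun u => K + Q * exp (r * (u - a))) t (Q * r * exp (r * (t - a))).
Proof. auto_derive; [exact I|]. unfold Rminus. ring. Qed.

Lemma is_derive_nonneg_of_lt_left (h : R -> R) t l d :
  is_derive h t l -> 0 < d -> (forall u, t - d < u < t -> h u < h t) -> 0 <= l.
Proof.
  intros Hd Hdp Hu. apply is_derive_Reals in Hd.
  destruct (Rle_or_lt 0 l) as [|Hl]; [assumption|]. exfalso.
  destruct (Hd (- l / 2)) as [[d' Hd'] Hk]; [lra|]. simpl in Hk.
  set (k := - Rmin d d' / 2).
  assert (0 < Rmin d d') by (apply Rmin_pos; lra).
  pose proof (Rmin_l d d'). pose proof (Rmin_r d d').
  assert (Hk0 : k <> 0) by (unfold k; lra).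
  assert (Hkd : Rabs k < d') by (unfold k; rewrite Rabs_left; lra).
  specialize (Hk k Hk0 Hkd). apply Rabs_def2 in Hk.
  assert (h (t + k) < h t) by (apply Hu; unfold k; lra).
  assert (/ k < 0) by (apply Rinv_lt_0_compat; unfold k; lra).
  assert ((h (t + k) - h t) / k > 0) by (unfold Rdiv; nra).
  lra.
Qed.

Lemma is_derive_pos_exists_gt_right (h : R -> R) t l d :
  is_derive h t l -> 0 < l -> 0 < d -> exists u, t < u < t + d /\ h t < h u.
Proof.
  intros Hd Hl Hdp. apply is_derive_Reals in Hd.
  destruct (Hd (l / 2)) as [[d' Hd'] Hk]; [lra|]. simpl in Hk.
  set (k := Rmin d d' / 2).
  assert (0 < Rmin d d') by (apply Rmin_pos; lra).
  pose proof (Rmin_l d d'). pose proof (Rmin_r d d').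
  assert (Hk0 : k <> 0) by (unfold k; lra).
  assert (Hkd : Rabs k < d') by (unfold k; rewrite Rabs_right; lra).
  specialize (Hk k Hk0 Hkd). apply Rabs_def2 in Hk.
  exists (t + k). split; [unfold k; lra|].
  assert (/ k > 0) by (apply Rinv_0_lt_compat; unfold k; lra).
  assert ((h (t + k) - h t) / k > 0) by lra.
  unfold Rdiv in *. nra.
Qed.

Lemma le_0_of_lt_eps_mult v K : 0 < K -> (forall e, 0 < e -> v < e * K) -> v <= 0.
Proof.
  intros HK H. destruct (Rle_or_lt v 0) as [|Hv]; [assumption|]. exfalso.
  specialize (H (v / (2 * K)) ltac:(apply Rdiv_lt_0_compat; lra)).
  replace (v / (2 * K) * K) with (v / 2) in H by (field; lra). lra.
Qed.

Lemma exp_neg_eventually_le Q r eps :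
  0 < r -> 0 < eps -> exists T, forall x, T <= x -> Q * exp (- r * x) <= eps.
Proof.
  intros Hr He. exists (Rabs Q / (r * eps)). intros x Hx.
  assert (Hx0 : 0 <= x) by (eapply Rle_trans; [|exact Hx];
    apply Rmult_le_pos; [apply Rabs_pos | left; apply Rinv_0_lt_compat; nra]).
  assert (Hexp : 1 + r * x <= exp (r * x)).
  { destruct (Req_dec (r * x) 0) as [E|E]; [rewrite E, exp_0; lra|].
    left. apply exp_ineq1. exact E. }
  assert (Hlin : Rabs Q <= eps * (r * x)).
  { apply Rmult_le_compat_l with (r := r * eps) in Hx; [|nra].
    replace (r * eps * (Rabs Q / (r * eps))) with (Rabs Q) in Hx by (field; lra). lra. }
  pose proof (exp_pos (r * x)). pose proof (Rle_abs Q).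
  rewrite Ropp_mult_distr_l_reverse, exp_Ropp.
  apply (Rmult_le_reg_r (exp (r * x))); [assumption|].
  rewrite Rmult_assoc, Rinv_l, Rmult_1_r by lra. nra.
Qed.

Lemma RInt_minus_R f g a b :
  continuity f -> continuity g -> RInt (fun u => f u - g u) a b = RInt f a b - RInt g a b.
Proof.
  intros Hf Hg.
  exact (@RInt_minus R_CompleteNormedModule f g a b (ex_RInt_continuity _ _ _ Hf) (ex_RInt_continuity _ _ _ Hg)).
Qed.

Lemma RInt_plus_R f g a b :
  continuity f -> continuity g -> RInt (fun u => f u + g u) a b = RInt f a b + RInt g a b.
Proof.
  intros Hf Hg.
  exact (@RInt_plus R_CompleteNormedModule f g a b (ex_RInt_continuity _ _ _ Hf) (ex_RInt_continuity _ _ _ Hg)).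
Qed.

Lemma RInt_abs_add_le f g H t :
  0 <= t -> continuity f -> continuity g -> continuity H ->
  (forall u, 0 <= u <= t -> Rabs (f u) + Rabs (g u) <= H u) ->
  Rabs (RInt f 0 t) + Rabs (RInt g 0 t) <= RInt H 0 t.
Proof.
  intros Ht Hf Hg HH Hb.
  assert (Af : continuity (fun u => Rabs (f u))) by exact (continuity_comp f Rabs Hf Rcontinuity_abs).
  assert (Ag : continuity (fun u => Rabs (g u))) by exact (continuity_comp g Rabs Hg Rcontinuity_abs).
  eapply Rle_trans.
  { apply Rplus_le_compat; apply abs_RInt_le;
      [exact Ht | apply ex_RInt_continuity, Hf | exact Ht | apply ex_RInt_continuity, Hg]. }
  rewrite <- RInt_plus_R by assumption.
  apply RInt_le; [exact Ht | apply ex_RInt_continuity, continuity_plus; assumption | apply ex_RInt_continuity, HH |].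
  intros u Hu. apply Hb. lra.
Qed.

Lemma exists_geometric_half_lt K e : 0 < e -> exists N, K * (/ 2) ^ N < e.
Proof.
  intros He. pose proof (Rabs_pos K) as HK. pose proof (Rle_abs K).
  destruct (pow_lt_1_zero (/ 2) ltac:(rewrite Rabs_right; lra) (e / (Rabs K + 1))) as [N HN].
  { apply Rdiv_lt_0_compat; lra. }
  exists N. specialize (HN N (le_n N)).
  assert (Hp : 0 < (/ 2) ^ N) by (apply pow_lt; lra).
  rewrite Rabs_right in HN by lra.
  apply Rmult_lt_compat_l with (r := Rabs K + 1) in HN; [|lra].
  replace ((Rabs K + 1) * (e / (Rabs K + 1))) with e in HN by (field; lra).
  nra.
Qed.

Lemma RInt_le_const_from_0 g K t :
  0 <= t -> continuity g -> (forall u, 0 <= u <= t -> g u <= K) -> RInt g 0 t <= t * K.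
Proof.
  intros Ht Hg Hb. replace (t * K) with (RInt (fun _ => K) 0 t)
    by (rewrite (@RInt_const R_CompleteNormedModule); simpl; unfold scal; simpl; unfold mult; simpl; ring).
  apply RInt_le; [exact Ht | apply ex_RInt_continuity, Hg | apply ex_RInt_continuity, continuity_constant |].
  intros u Hu. apply Hb. lra.
Qed.

Lemma pow_half_le m n : (m <= n)%nat -> (/ 2) ^ n <= (/ 2) ^ m.
Proof.
  intros H. induction H as [|n _ IH]; [lra|].
  simpl. pose proof (pow_lt (/ 2) n ltac:(lra)). lra.
Qed.

Lemma le_0_of_le_geometric_half a K : (forall n, a <= K * (/ 2) ^ n) -> a <= 0.
Proof.
  intros H. destruct (Rle_or_lt a 0) as [|Ha]; [assumption|]. exfalso.
  destruct (exists_geometric_half_lt K a Ha) as [N HN]. specialize (H N). lra.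
Qed.

Lemma at_right_iff_continuity_pt_max h a :
  filterlim h (at_right a) (locally (h a)) <-> continuity_pt (fun u => h (Rmax u a)) a.
Proof.
  rewrite continuity_pt_filterlim. cbv beta. rewrite (Rmax_right a a) by lra.
  rewrite !filterlim_locally. split; intros H eps; destruct (H eps) as [d Hd]; exists d.
  - intros u Hu. destruct (Rle_or_lt u a) as [Hua|Hua].
    + rewrite Rmax_right by lra. apply ball_center.
    + rewrite Rmax_left by lra. apply Hd; assumption.
  - intros u Hu Hua. specialize (Hd u Hu). rewrite Rmax_left in Hd by lra. exact Hd.
Qed.

(** * A comparison principle *)

Lemma at_right_eps_delta h a :
  filterlim h (at_right a) (locally (h a)) ->
  forall e, 0 < e -> exists d, 0 < d /\ forall u, a < u < a + d -> Rabs (h u - h a) < e.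
Proof.
  intros H e He. destruct (proj1 (filterlim_locally _ _) H (mkposreal e He)) as [[d Hd] Hu].
  exists d. split; [exact Hd|]. intros u Hu'. apply (Hu u); [|lra].
  change (Rabs (u - a) < d). rewrite Rabs_right; lra.
Qed.

Lemma continuity_pt_eps_delta h m :
  continuity_pt h m -> forall e, 0 < e -> exists d, 0 < d /\ forall u, Rabs (u - m) < d -> Rabs (h u - h m) < e.
Proof.
  intros H e He. destruct (H e He) as [d [Hd Hu]]. exists d. split; [exact Hd|].
  intros u Hum. destruct (Req_dec u m) as [->|Hne].
  - rewrite Rminus_eq_0, Rabs_R0. exact He.
  - apply Hu. split; [split; [exact I | auto] | exact Hum].
Qed.

Lemma continuity_pt_nonpos_of_neg_left (h : R -> R) a m :
  a < m -> continuity_pt h m -> (forall u, a <= u < m -> h u < 0) -> h m <= 0.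
Proof.
  intros Ham Hc Hneg. destruct (Rle_or_lt (h m) 0) as [|Hp]; [assumption|]. exfalso.
  destruct (continuity_pt_eps_delta h m Hc (h m) Hp) as [d [Hd Hu]].
  pose proof (Rmax_l a (m - d / 2)). pose proof (Rmax_r a (m - d / 2)). set (u := Rmax a (m - d / 2)) in *.
  assert (u < m) by (apply Rmax_lub_lt; lra).
  specialize (Hu u ltac:(rewrite Rabs_left; lra)). apply Rabs_def2 in Hu.
  specialize (Hneg u ltac:(lra)). lra.
Qed.

(* The supremum of the initial stretch on which [h < 0] is the first zero of [h]. *)
Lemma first_zero (h : R -> R) a b :
  a < b -> filterlim h (at_right a) (locally (h a)) ->
  (forall t, a < t <= b -> continuity_pt h t) -> h a < 0 -> 0 <= h b ->
  exists m, a < m <= b /\ h m = 0 /\ forall u, a <= u < m -> h u < 0.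
Proof.
  intros Hab Hra Hc Ha Hb.
  set (E := fun u => a <= u <= b /\ forall v, a <= v <= u -> h v < 0).
  assert (HaE : E a) by (split; [lra | intros v Hv; replace v with a by lra; exact Ha]).
  destruct (completeness E) as [m [Hub Hlub]].
  { exists b. intros u [Hu _]. lra. }
  { exists a. exact HaE. }
  assert (Hma : a <= m) by (apply Hub, HaE).
  assert (Hmb : m <= b) by (apply Hlub; intros u [Hu _]; lra).
  assert (Hneg : forall u, a <= u < m -> h u < 0).
  { intros u Hu. destruct (Rlt_or_le (h u) 0) as [|Hpos]; [assumption|]. exfalso.
    assert (m <= u); [|lra]. apply Hlub. intros w [Hw Hwv].
    destruct (Rle_or_lt w u) as [|Huw]; [assumption|]. specialize (Hwv u ltac:(lra)). lra. }
  assert (Hma' : a < m).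
  { destruct (at_right_eps_delta h a Hra (- h a) ltac:(lra)) as [d [Hd Hu]].
    pose proof (Rmin_l (a + d / 2) b). pose proof (Rmin_r (a + d / 2) b). set (w := Rmin (a + d / 2) b) in *.
    assert (a < w) by (apply Rmin_glb_lt; lra).
    assert (E w); [|pose proof (Hub w ltac:(assumption)); lra].
    split; [lra|]. intros v Hv. destruct (Req_dec v a) as [->|]; [exact Ha|].
    specialize (Hu v ltac:(lra)). apply Rabs_def2 in Hu. lra. }
  exists m. split; [lra|]. split; [|exact Hneg].
  apply Rle_antisym; [apply (continuity_pt_nonpos_of_neg_left h a m); [lra | apply Hc; lra | exact Hneg]|].
  destruct (Rle_or_lt 0 (h m)) as [|Hn]; [assumption|]. exfalso.
  assert (m < b) by (destruct (Req_dec m b) as [->|]; lra).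
  destruct (continuity_pt_eps_delta h m (Hc m ltac:(lra)) (- h m) ltac:(lra)) as [d [Hd Hu]].
  pose proof (Rmin_l (m + d / 2) b). pose proof (Rmin_r (m + d / 2) b). set (w := Rmin (m + d / 2) b) in *.
  assert (m < w) by (apply Rmin_glb_lt; lra).
  assert (E w); [|pose proof (Hub w ltac:(assumption)); lra].
  split; [lra|]. intros v Hv. destruct (Rlt_or_le v m); [apply Hneg; lra|].
  specialize (Hu v ltac:(rewrite Rabs_right; lra)). apply Rabs_def2 in Hu. lra.
Qed.

Lemma strict_comparison (h dh q dq : R -> R) a b :
  filterlim h (at_right a) (locally (h a)) -> filterlim q (at_right a) (locally (q a)) ->
  (forall t, a < t <= b -> is_derive h t (dh t)) -> (forall t, a < t <= b -> is_derive q t (dq t)) ->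
  h a < q a ->
  (forall t, a < t <= b -> h t = q t -> (forall u, a <= u < t -> h u < q u) -> dh t < dq t) ->
  forall t, a <= t <= b -> h t < q t.
Proof.
  intros Hrh Hrq Hdh Hdq Ha Htouch t Ht.
  destruct (Rlt_or_le (h t) (q t)) as [|Hge]; [assumption|]. exfalso.
  assert (Hat : a < t) by (destruct (Req_dec a t) as [<-|]; lra).
  destruct (first_zero (fun u => h u - q u) a t Hat (at_right_minus h q a Hrh Hrq)) as [m [Hm [Hm0 Hbefore]]].
  - intros u Hu. apply continuity_pt_minus;
      [eapply is_derive_continuity_pt, Hdh | eapply is_derive_continuity_pt, Hdq]; lra.
  - lra.
  - lra.
  - assert (Hd : dh m - dq m < 0).
    { cut (dh m < dq m); [lra|]. apply Htouch; [lra|lra|].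
      intros u Hu. specialize (Hbefore u Hu). lra. }
    assert (0 <= dh m - dq m); [|lra].
    apply (is_derive_nonneg_of_lt_left (fun u => h u - q u) m _ (m - a)); [|lra|].
    + apply (is_derive_minus h q); [apply Hdh | apply Hdq]; lra.
    + intros u Hu. rewrite Hm0. apply Hbefore. lra.
Qed.

Lemma exp_barrier_at_right K Q r a :
  filterlim (fun u => K + Q * exp (r * (u - a))) (at_right a) (locally (K + Q * exp (r * (a - a)))).
Proof.
  apply (continuity_pt_at_right (fun u => K + Q * exp (r * (u - a)))).
  exact (is_derive_continuity_pt _ _ _ (is_derive_exp_barrier K Q r a a)).
Qed.

Lemma le_of_deriv_nonpos_above (h dh : R -> R) a b K :
  filterlim h (at_right a) (locally (h a)) -> (forall t, a < t <= b -> is_derive h t (dh t)) ->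
  h a <= K -> (forall t, a < t <= b -> K < h t -> dh t <= 0) ->
  forall t, a <= t <= b -> h t <= K.
Proof.
  intros Hr Hd Ha Habove t Ht.
  cut (h t - K <= 0); [lra|].
  apply (le_0_of_lt_eps_mult _ (exp (1 * (t - a))) (exp_pos _)). intros e He.
  cut (h t < K + e * exp (1 * (t - a))); [lra|].
  apply (strict_comparison h dh _ (fun u => e * 1 * exp (1 * (u - a))) a b Hr
           (exp_barrier_at_right K e 1 a) Hd (fun u _ => is_derive_exp_barrier K e 1 a u)); [| |exact Ht].
  - rewrite Rminus_eq_0, Rmult_0_r, exp_0. lra.
  - intros u Hu Heq _. pose proof (exp_pos (1 * (u - a))).
    assert (0 < e * exp (1 * (u - a))) by (apply Rmult_lt_0_compat; lra).
    pose proof (Habove u Hu ltac:(lra)). lra.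
Qed.

Lemma pos_of_deriv_ge (h dh : R -> R) a b k :
  0 <= k -> filterlim h (at_right a) (locally (h a)) -> (forall t, a < t <= b -> is_derive h t (dh t)) ->
  0 < h a -> (forall t, a < t <= b -> 0 < h t -> - k * h t <= dh t) ->
  forall t, a <= t <= b -> 0 < h t.
Proof.
  intros Hk Hr Hd Ha Hbelow t Ht.
  set (r := - (k + 1)).
  assert (Hlt : 0 + h a / 2 * exp (r * (t - a)) < h t).
  { apply (strict_comparison _ (fun u => h a / 2 * r * exp (r * (u - a))) h dh a b
             (exp_barrier_at_right 0 (h a / 2) r a) Hr (fun u _ => is_derive_exp_barrier 0 (h a / 2) r a u) Hd);
      [| |exact Ht].
    - rewrite Rminus_eq_0, Rmult_0_r, exp_0. lra.
    - intros u Hu Heq _. pose proof (exp_pos (r * (u - a))).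
      assert (Hpos : 0 < h u) by (rewrite <- Heq; nra).
      pose proof (Hbelow u Hu Hpos). rewrite <- Heq in *. unfold r in *. nra. }
  pose proof (exp_pos (r * (t - a))). nra.
Qed.

Lemma eventually_le_of_deriv_decay (h dh : R -> R) a c k :
  0 < k -> filterlim h (at_right a) (locally (h a)) -> (forall t, a < t -> is_derive h t (dh t)) ->
  (forall t, a < t -> dh t <= - k * (h t - c)) ->
  forall eps, 0 < eps -> exists T, forall t, T <= t -> h t <= c + eps.
Proof.
  intros Hk Hr Hd Hdecay eps He.
  set (Q := Rmax (h a - c) 0 + eps). set (r := - (k / 2)).
  assert (HQ : 0 < Q) by (unfold Q; pose proof (Rmax_r (h a - c) 0); lra).
  assert (Hb : forall t, a <= t -> h t < c + Q * exp (r * (t - a))).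
  { intros t Ht.
    apply (strict_comparison h dh _ (fun u => Q * r * exp (r * (u - a))) a t Hr (exp_barrier_at_right c Q r a)
             (fun u Hu => Hd u (proj1 Hu)) (fun u _ => is_derive_exp_barrier c Q r a u)); [| |lra].
    - rewrite Rminus_eq_0, Rmult_0_r, exp_0. pose proof (Rmax_l (h a - c) 0). unfold Q. lra.
    - intros u Hu Heq _. pose proof (exp_pos (r * (u - a))). pose proof (Hdecay u (proj1 Hu)).
      assert (0 < Q * exp (r * (u - a))) by nra. rewrite Heq in *. unfold r in *. nra. }
  destruct (exp_neg_eventually_le Q (k / 2) eps ltac:(lra) He) as [T HT].
  exists (Rmax (a + T) a). intros t Ht. pose proof (Rmax_l (a + T) a). pose proof (Rmax_r (a + T) a).
  specialize (Hb t ltac:(lra)). specialize (HT (t - a) ltac:(lra)).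
  unfold r in Hb. rewrite Ropp_mult_distr_l_reverse in Hb. rewrite Ropp_mult_distr_l_reverse in HT. lra.
Qed.

Lemma delay_gronwall_zero (h dh : R -> R) a b tau A B :
  0 <= tau -> 0 <= A -> 0 <= B ->
  filterlim h (at_right a) (locally (h a)) -> (forall t, a < t <= b -> is_derive h t (dh t)) ->
  (forall u, a - tau <= u <= a -> h u = 0) -> (forall u, a - tau <= u <= b -> 0 <= h u) ->
  (forall t, a < t <= b -> dh t <= A * h t + B * h (t - tau)) ->
  forall t, a <= t <= b -> h t = 0.
Proof.
  intros Htau HA HB Hr Hd Hinit Hnn Hdh t Ht.
  set (r := A + B + 1).
  apply Rle_antisym; [|apply Hnn; lra].
  cut (h t - 0 <= 0); [lra|].
  apply (le_0_of_lt_eps_mult _ (exp (r * (t - a))) (exp_pos _)). intros e He.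
  cut (h t < 0 + e * exp (r * (t - a))); [lra|].
  apply (strict_comparison h dh _ (fun u => e * r * exp (r * (u - a))) a b Hr
           (exp_barrier_at_right 0 e r a) Hd (fun u _ => is_derive_exp_barrier 0 e r a u)); [| |exact Ht].
  - rewrite Hinit by lra. rewrite Rminus_eq_0, Rmult_0_r, exp_0. lra.
  - intros u Hu Heq Hbefore. set (E := e * exp (r * (u - a))) in *.
    assert (HE : 0 < E) by (apply Rmult_lt_0_compat; [lra | apply exp_pos]).
    (* At the first touching time the delayed value is still below the increasing barrier. *)
    assert (Hdelay : h (u - tau) <= E).
    { destruct (Rle_or_lt (u - tau) a) as [Hle|Hgt]; [rewrite Hinit by lra; lra|].
      destruct (Req_dec tau 0) as [->|Htau0]; [rewrite Rminus_0_r; lra|].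
      specialize (Hbefore (u - tau) ltac:(lra)).
      assert (exp (r * (u - tau - a)) <= exp (r * (u - a))).
      { destruct (Req_dec (r * (u - tau - a)) (r * (u - a))) as [->|]; [lra|].
        left. apply exp_increasing. unfold r. nra. }
      unfold E. nra. }
    pose proof (Hdh u Hu). pose proof (Hnn u ltac:(lra)). pose proof (Hnn (u - tau) ltac:(lra)).
    replace (e * r * exp (r * (u - a))) with (r * E) by (unfold E; ring). unfold r. nra.
Qed.

(** * Picard iteration for Lipschitz delay systems *)

Definition lipschitz4 (F : R -> R -> R -> R -> R) (L : R) : Prop :=
  forall a b c d a' b' c' d',
    Rabs (F a b c d - F a' b' c' d')
      <= L * (Rabs (a - a') + Rabs (b - b') + Rabs (c - c') + Rabs (d - d')).

Definition rhs_along (tau : R) (F : R -> R -> R -> R -> R) (x y : R -> R) (u : R) : R :=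
  F (x u) (y u) (x (u - tau)) (y (u - tau)).

(* For [t <= 0] the step returns [x0 t], so a fixed point keeps the initial history. *)
Definition picard_step (tau : R) (F : R -> R -> R -> R -> R) (x0 x y : R -> R) (t : R) : R :=
  x0 t + RInt (rhs_along tau F x y) 0 (Rmax t 0).

Definition gap (x y x' y' : R -> R) (u : R) : R := Rabs (x u - x' u) + Rabs (y u - y' u).

Lemma gap_sym x y x' y' u : gap x y x' y' u = gap x' y' x y u.
Proof. unfold gap. rewrite (Rabs_minus_sym (x u)), (Rabs_minus_sym (y u)). reflexivity. Qed.

Lemma gap_triangle x y x' y' x'' y'' u :
  gap x y x'' y'' u <= gap x y x' y' u + gap x' y' x'' y'' u.
Proof.
  unfold gap.
  pose proof (Rabs_triang (x u - x' u) (x' u - x'' u)). pose proof (Rabs_triang (y u - y' u) (y' u - y'' u)).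
  replace (x u - x' u + (x' u - x'' u)) with (x u - x'' u) in * by ring.
  replace (y u - y' u + (y' u - y'' u)) with (y u - y'' u) in * by ring. lra.
Qed.

Lemma continuity_pt_abs_sub f z : continuity f -> continuity_pt (fun u => Rabs (f u - f z)) z.
Proof.
  intros Hf. apply (continuity_pt_comp (fun u => f u - f z) Rabs); [|apply Rcontinuity_abs].
  apply continuity_pt_minus; [apply Hf | apply continuity_constant].
Qed.

Lemma continuity_gap x y x' y' :
  continuity x -> continuity y -> continuity x' -> continuity y' -> continuity (gap x y x' y').
Proof.
  intros. unfold gap.
  apply continuity_plus; apply (continuity_comp _ Rabs);
    try apply Rcontinuity_abs; apply continuity_minus; assumption.
Qed.

Lemma continuity_rhs_along tau F L x y :
  lipschitz4 F L -> continuity x -> continuity y -> continuity (rhs_along tau F x y).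
Proof.
  intros HF Hx Hy z.
  apply (continuity_pt_of_dominated _ (fun u => L * (Rabs (x u - x z) + Rabs (y u - y z)
           + Rabs (x (u - tau) - x (z - tau)) + Rabs (y (u - tau) - y (z - tau))))).
  - apply (continuity_pt_scal (fun u => _ + _)).
    repeat apply continuity_pt_plus.
    + exact (continuity_pt_abs_sub x z Hx).
    + exact (continuity_pt_abs_sub y z Hy).
    + exact (continuity_pt_abs_sub (fun u => x (u - tau)) z (continuity_shift x tau Hx)).
    + exact (continuity_pt_abs_sub (fun u => y (u - tau)) z (continuity_shift y tau Hy)).
  - rewrite !Rminus_eq_0, Rabs_R0. ring.
  - intros u. apply HF.
Qed.

Lemma continuity_picard_step tau F L x0 x y :
  lipschitz4 F L -> continuity x0 -> continuity x -> continuity y -> continuity (picard_step tau F x0 x y).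
Proof.
  intros HF H0 Hx Hy. unfold picard_step. apply continuity_plus; [exact H0|].
  apply (continuity_comp (fun t => Rmax t 0) (fun t => RInt (rhs_along tau F x y) 0 t) continuity_Rmax_0).
  apply continuity_RInt_from_0, (continuity_rhs_along tau F L); assumption.
Qed.

Section Picard.

Variables (tau L b0 : R) (F G : R -> R -> R -> R -> R) (Phi Psi : R -> R).
Hypothesis htau : 0 <= tau.
Hypothesis hL : 0 < L.
Hypothesis hF : lipschitz4 F L.
Hypothesis hG : lipschitz4 G L.
Hypothesis hPhi : continuity Phi.
Hypothesis hPsi : continuity Psi.
Hypothesis hb0 : forall u, Rabs (rhs_along tau F Phi Psi u) + Rabs (rhs_along tau G Phi Psi u) <= b0.

Fixpoint picard (n : nat) : (R -> R) * (R -> R) :=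
  match n with
  | O => (Phi, Psi)
  | S n => (picard_step tau F Phi (fst (picard n)) (snd (picard n)),
            picard_step tau G Psi (fst (picard n)) (snd (picard n)))
  end.

Definition picard_x n := fst (picard n).
Definition picard_y n := snd (picard n).

Lemma continuity_picard n : continuity (picard_x n) /\ continuity (picard_y n).
Proof.
  induction n as [|n [IHx IHy]]; [split; assumption|].
  split; [apply (continuity_picard_step tau F L) | apply (continuity_picard_step tau G L)]; assumption.
Qed.

Lemma gap_picard_step x y x' y' t :
  continuity x -> continuity y -> continuity x' -> continuity y' ->
  gap (picard_step tau F Phi x y) (picard_step tau G Psi x y)
      (picard_step tau F Phi x' y') (picard_step tau G Psi x' y') t
  <= RInt (fun u => 2 * L * (gap x y x' y' u + gap x y x' y' (u - tau))) 0 (Rmax t 0).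
Proof.
  intros Hx Hy Hx' Hy'. unfold gap at 1, picard_step. rewrite !Rminus_plus_l_l.
  pose proof (continuity_rhs_along tau F L x y hF Hx Hy).
  pose proof (continuity_rhs_along tau F L x' y' hF Hx' Hy').
  pose proof (continuity_rhs_along tau G L x y hG Hx Hy).
  pose proof (continuity_rhs_along tau G L x' y' hG Hx' Hy').
  rewrite <- !RInt_minus_R by assumption.
  apply RInt_abs_add_le; [apply Rmax_r | apply continuity_minus; assumption | apply continuity_minus; assumption | |].
  - apply continuity_scal, continuity_plus; [|apply continuity_shift]; apply continuity_gap; assumption.
  - intros u _. unfold gap, rhs_along.
    pose proof (hF (x u) (y u) (x (u - tau)) (y (u - tau)) (x' u) (y' u) (x' (u - tau)) (y' (u - tau))).
    pose proof (hG (x u) (y u) (x (u - tau)) (y (u - tau)) (x' u) (y' u) (x' (u - tau)) (y' (u - tau))).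
    lra.
Qed.

(* Integrating [4 L * picard_weight] over [[0, t]] gives at most [picard_weight t / 2]; this halves
   each Picard increment. *)
Definition picard_weight (t : R) : R := b0 / (4 * L) * exp (8 * L * Rmax t 0).

Lemma increment_bound_nonneg : 0 <= b0.
Proof.
  pose proof (hb0 0). pose proof (Rabs_pos (rhs_along tau F Phi Psi 0)).
  pose proof (Rabs_pos (rhs_along tau G Phi Psi 0)). lra.
Qed.

Lemma picard_weight_nonneg t : 0 <= picard_weight t.
Proof.
  unfold picard_weight. pose proof increment_bound_nonneg. pose proof (exp_pos (8 * L * Rmax t 0)).
  apply Rmult_le_pos; [apply Rmult_le_pos; [lra | left; apply Rinv_0_lt_compat; lra] | lra].
Qed.

Lemma picard_weight_le u t : u <= Rmax t 0 -> picard_weight u <= picard_weight t.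
Proof.
  intros Hut. unfold picard_weight. pose proof increment_bound_nonneg.
  apply Rmult_le_compat_l; [apply Rmult_le_pos; [lra | left; apply Rinv_0_lt_compat; lra]|].
  assert (Rmax u 0 <= Rmax t 0) by (apply Rmax_lub; [|apply Rmax_r]; lra).
  destruct (Req_dec (Rmax u 0) (Rmax t 0)) as [->|]; [lra|]. left. apply exp_increasing. nra.
Qed.

Lemma gap_picard_first t : gap (picard_x 1) (picard_y 1) (picard_x 0) (picard_y 0) t <= picard_weight t * / 2.
Proof.
  unfold gap, picard_x, picard_y; simpl. unfold picard_step. rewrite !Rplus_minus_l.
  eapply Rle_trans.
  { apply (RInt_abs_add_le _ _ (fun _ => b0)); [apply Rmax_r | apply (continuity_rhs_along tau F L) |
      apply (continuity_rhs_along tau G L) | apply continuity_constant |]; try assumption.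
    intros u _. apply hb0. }
  rewrite (@RInt_const R_CompleteNormedModule). simpl. unfold scal; simpl; unfold mult; simpl.
  unfold picard_weight. set (x := 8 * L * Rmax t 0). pose proof increment_bound_nonneg.
  pose proof (Rmax_r t 0).
  assert (Hx : x <= exp x).
  { destruct (Req_dec x 0) as [->|Hx]; [rewrite exp_0; lra|]. pose proof (exp_ineq1 x Hx). lra. }
  replace ((Rmax t 0 - 0) * b0) with (b0 / (8 * L) * x) by (unfold x; field; lra).
  replace (b0 / (4 * L) * exp x * / 2) with (b0 / (8 * L) * exp x) by (field; lra).
  apply Rmult_le_compat_l; [apply Rmult_le_pos; [lra | left; apply Rinv_0_lt_compat; lra] | exact Hx].
Qed.

Lemma RInt_scaled_exp_from_0 K t :
  RInt (fun u => K * exp (8 * L * u)) 0 t = K * ((exp (8 * L * t) - 1) / (8 * L)).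
Proof.
  rewrite <- RInt_exp_from_0 by lra.
  exact (@RInt_scal R_CompleteNormedModule (fun u => exp (8 * L * u)) 0 t K
           (ex_RInt_continuity _ _ _ (continuity_comp (fun u => 8 * L * u) exp
              (continuity_scal _ _ continuity_identity) (derivable_continuous _ derivable_exp)))).
Qed.

Lemma gap_picard_succ n t :
  gap (picard_x (S n)) (picard_y (S n)) (picard_x n) (picard_y n) t <= picard_weight t * (/ 2) ^ S n.
Proof.
  revert t. induction n as [|n IH]; intros t; [rewrite pow_1; apply gap_picard_first|].
  destruct (continuity_picard n) as [Cx Cy]. destruct (continuity_picard (S n)) as [Cx' Cy'].
  eapply Rle_trans;
    [exact (gap_picard_step (picard_x (S n)) (picard_y (S n)) (picard_x n) (picard_y n) t Cx' Cy' Cx Cy)|].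
  set (K := b0 * (/ 2) ^ S n).
  assert (HK : 0 <= K) by (pose proof increment_bound_nonneg; pose proof (pow_lt (/ 2) (S n)); unfold K; nra).
  eapply Rle_trans.
  { apply (RInt_le _ (fun u => K * exp (8 * L * u))); [apply Rmax_r | | |].
    - apply ex_RInt_continuity, continuity_scal, continuity_plus; [|apply continuity_shift];
        apply continuity_gap; assumption.
    - apply ex_RInt_continuity, continuity_scal, (continuity_comp (fun u => 8 * L * u) exp);
        [apply continuity_scal, continuity_identity | apply derivable_continuous, derivable_exp].
    - intros u [Hu _]. assert (Hu0 : 0 < u) by (pose proof (Rmax_r t 0); lra).
      pose proof (IH u). pose proof (IH (u - tau)).
      pose proof (picard_weight_le (u - tau) u ltac:(pose proof (Rmax_l u 0); lra)).
      assert (Hw : picard_weight u = b0 / (4 * L) * exp (8 * L * u))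
        by (unfold picard_weight; rewrite Rmax_left by lra; reflexivity).
      assert (picard_weight (u - tau) * (/ 2) ^ S n <= picard_weight u * (/ 2) ^ S n)
        by (apply Rmult_le_compat_r; [left; apply pow_lt; lra | assumption]).
      replace (K * exp (8 * L * u)) with (2 * L * (2 * (picard_weight u * (/ 2) ^ S n)))
        by (rewrite Hw; unfold K; field; lra).
      apply Rmult_le_compat_l; lra. }
  rewrite RInt_scaled_exp_from_0. unfold picard_weight, K. set (E := exp (8 * L * Rmax t 0)).
  assert (0 < E) by apply exp_pos. pose proof increment_bound_nonneg.
  pose proof (pow_lt (/ 2) (S n) ltac:(lra)).
  replace (b0 / (4 * L) * E * (/ 2) ^ S (S n)) with (b0 * (/ 2) ^ S n * (E / (8 * L))) by (simpl; field; lra).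
  apply Rmult_le_compat_l; [nra|]. unfold Rdiv.
  apply Rmult_le_compat_r; [left; apply Rinv_0_lt_compat; lra | lra].
Qed.

Lemma gap_picard n m t :
  (n <= m)%nat -> gap (picard_x m) (picard_y m) (picard_x n) (picard_y n) t <= picard_weight t * (/ 2) ^ n.
Proof.
  intros Hnm. replace m with (n + (m - n))%nat by lia. generalize (m - n)%nat as k.
  assert (Hk : forall k, gap (picard_x (n + k)) (picard_y (n + k)) (picard_x n) (picard_y n) t
                         <= picard_weight t * ((/ 2) ^ n - (/ 2) ^ (n + k))).
  { induction k as [|k IH].
    - rewrite Nat.add_0_r. unfold gap. rewrite !Rminus_eq_0, Rabs_R0. lra.
    - rewrite Nat.add_succ_r.
      eapply Rle_trans; [apply (gap_triangle _ _ (picard_x (n + k)) (picard_y (n + k)))|].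
      pose proof (gap_picard_succ (n + k) t). simpl in *. lra. }
  intros k. eapply Rle_trans; [apply Hk|]. pose proof (picard_weight_nonneg t).
  pose proof (pow_lt (/ 2) (n + k) ltac:(lra)).
  apply Rmult_le_compat_l; lra.
Qed.

Definition picard_lim_x (t : R) : R := real (Lim_seq (fun n => picard_x n t)).
Definition picard_lim_y (t : R) : R := real (Lim_seq (fun n => picard_y n t)).

Lemma is_lim_seq_of_cauchy u : ex_lim_seq_cauchy u -> is_lim_seq u (real (Lim_seq u)).
Proof.
  intros H. apply ex_lim_seq_cauchy_corr in H. destruct H as [l Hl].
  rewrite (is_lim_seq_unique _ _ Hl). exact Hl.
Qed.

Lemma gap_picard_tail N n m t :
  (N <= n)%nat -> (N <= m)%nat ->
  gap (picard_x n) (picard_y n) (picard_x m) (picard_y m) t <= picard_weight t * (/ 2) ^ N.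
Proof.
  intros Hn Hm. pose proof (picard_weight_nonneg t).
  destruct (Nat.le_ge_cases n m) as [Hnm|Hnm]; [rewrite gap_sym|];
    (eapply Rle_trans; [apply gap_picard; exact Hnm|]); apply Rmult_le_compat_l; try apply pow_half_le; assumption.
Qed.

Lemma is_lim_seq_picard t :
  is_lim_seq (fun n => picard_x n t) (picard_lim_x t) /\ is_lim_seq (fun n => picard_y n t) (picard_lim_y t).
Proof.
  split; apply is_lim_seq_of_cauchy; intros [e He]; simpl;
    destruct (exists_geometric_half_lt (picard_weight t) e He) as [N HN]; exists N; intros n m Hn Hm;
    pose proof (gap_picard_tail N n m t Hn Hm) as Hg; unfold gap in Hg;
    pose proof (Rabs_pos (picard_x n t - picard_x m t)); pose proof (Rabs_pos (picard_y n t - picard_y m t)); lra.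
Qed.

Lemma gap_picard_limit n t : gap picard_lim_x picard_lim_y (picard_x n) (picard_y n) t <= picard_weight t * (/ 2) ^ n.
Proof.
  destruct (is_lim_seq_picard t) as [Lx Ly].
  apply (is_lim_seq_le_loc (fun m => gap (picard_x m) (picard_y m) (picard_x n) (picard_y n) t)
           (fun _ => picard_weight t * (/ 2) ^ n)
           (gap picard_lim_x picard_lim_y (picard_x n) (picard_y n) t) (picard_weight t * (/ 2) ^ n)).
  - exists n. intros m Hm. apply gap_picard. exact Hm.
  - apply is_lim_seq_plus'; apply (is_lim_seq_abs _ (Finite _)), is_lim_seq_minus';
      try apply is_lim_seq_const; assumption.
  - apply is_lim_seq_const.
Qed.

Lemma continuity_picard_limit : continuity picard_lim_x /\ continuity picard_lim_y.
Proof.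
  assert (Hcvu : forall z e, 0 < e -> exists N, forall n y, (N <= n)%nat -> Boule z (mkposreal 1 Rlt_0_1) y ->
            gap picard_lim_x picard_lim_y (picard_x n) (picard_y n) y < e).
  { intros z e He. destruct (exists_geometric_half_lt (picard_weight (Rabs z + 1)) e He) as [N HN].
    exists N. intros n y Hn Hy. unfold Boule in Hy. simpl in Hy.
    eapply Rle_lt_trans; [apply gap_picard_limit|]. eapply Rle_lt_trans; [|exact HN].
    apply Rmult_le_compat; [apply picard_weight_nonneg | left; apply pow_lt; lra | | apply pow_half_le, Hn].
    apply picard_weight_le. apply Rabs_def2 in Hy. pose proof (Rle_abs z). pose proof (Rmax_l (Rabs z + 1) 0).
    lra. }
  split; intros z;
    [apply (CVU_continuity picard_x picard_lim_x z (mkposreal 1 Rlt_0_1)) |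
     apply (CVU_continuity picard_y picard_lim_y z (mkposreal 1 Rlt_0_1))];
    try (intros n y _; apply continuity_picard);
    try (unfold Boule; simpl; rewrite Rminus_eq_0, Rabs_R0; lra);
    intros e He; destruct (Hcvu z e He) as [N HN]; exists N; intros n y Hn Hy;
    specialize (HN n y Hn Hy); unfold gap in HN;
    pose proof (Rabs_pos (picard_lim_x y - picard_x n y)); pose proof (Rabs_pos (picard_lim_y y - picard_y n y)); lra.
Qed.

Lemma gap_picard_limit_step n t :
  gap picard_lim_x picard_lim_y
      (picard_step tau F Phi picard_lim_x picard_lim_y) (picard_step tau G Psi picard_lim_x picard_lim_y) t
  <= (picard_weight t + 4 * L * Rmax t 0 * picard_weight t) * (/ 2) ^ n.
Proof.
  destruct continuity_picard_limit as [CX CY]. destruct (continuity_picard n) as [Cx Cy].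
  pose proof (pow_lt (/ 2) n ltac:(lra)). pose proof (picard_weight_nonneg t).
  assert (0 <= picard_weight t * (/ 2) ^ n) by (apply Rmult_le_pos; lra).
  eapply Rle_trans; [apply (gap_triangle _ _ (picard_x (S n)) (picard_y (S n)))|].
  pose proof (gap_picard_limit (S n) t) as A1. simpl in A1.
  change (picard_x (S n)) with (picard_step tau F Phi (picard_x n) (picard_y n)) in A1 |- *.
  change (picard_y (S n)) with (picard_step tau G Psi (picard_x n) (picard_y n)) in A1 |- *.
  eapply Rle_trans; [apply Rplus_le_compat_l, gap_picard_step; assumption|].
  eapply Rle_trans; [apply Rplus_le_compat_l, (RInt_le_const_from_0 _ (4 * L * (picard_weight t * (/ 2) ^ n)));
                     [apply Rmax_r | | ] | nra].
  - apply continuity_scal, continuity_plus; [|apply continuity_shift]; apply continuity_gap; assumption.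
  - intros u Hu. rewrite !(gap_sym (picard_x n)).
    pose proof (gap_picard_limit n u). pose proof (gap_picard_limit n (u - tau)).
    assert (picard_weight u * (/ 2) ^ n <= picard_weight t * (/ 2) ^ n)
      by (apply Rmult_le_compat_r; [lra | apply picard_weight_le; lra]).
    assert (picard_weight (u - tau) * (/ 2) ^ n <= picard_weight t * (/ 2) ^ n)
      by (apply Rmult_le_compat_r; [lra | apply picard_weight_le; lra]).
    nra.
Qed.

Lemma picard_limit_fixed t :
  picard_lim_x t = picard_step tau F Phi picard_lim_x picard_lim_y t
  /\ picard_lim_y t = picard_step tau G Psi picard_lim_x picard_lim_y t.
Proof.
  pose proof (le_0_of_le_geometric_half _ _ (fun n => gap_picard_limit_step n t)) as H.
  unfold gap in H.
  pose proof (Rabs_pos (picard_lim_x t - picard_step tau F Phi picard_lim_x picard_lim_y t)).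
  pose proof (Rabs_pos (picard_lim_y t - picard_step tau G Psi picard_lim_x picard_lim_y t)).
  split; apply Rminus_diag_uniq, Rabs_eq_0; lra.
Qed.

End Picard.

Lemma picard_fixed_point tau L b0 F G Phi Psi :
  0 <= tau -> 0 < L -> lipschitz4 F L -> lipschitz4 G L -> continuity Phi -> continuity Psi ->
  (forall u, Rabs (rhs_along tau F Phi Psi u) + Rabs (rhs_along tau G Phi Psi u) <= b0) ->
  exists x y, continuity x /\ continuity y /\
    forall t, x t = picard_step tau F Phi x y t /\ y t = picard_step tau G Psi x y t.
Proof.
  intros. exists (picard_lim_x tau F G Phi Psi), (picard_lim_y tau F G Phi Psi).
  destruct (continuity_picard_limit tau L b0 F G Phi Psi) as [CX CY]; try assumption.
  split; [exact CX|]. split; [exact CY|]. intros t. apply (picard_limit_fixed tau L b0); assumption.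
Qed.

Lemma picard_step_nonpos tau F x0 x y t : t <= 0 -> picard_step tau F x0 x y t = x0 t.
Proof. intros Ht. unfold picard_step. rewrite Rmax_right, RInt_point by lra. apply Rplus_0_r. Qed.

Lemma is_derive_picard_fixed tau F L z0 z x y t :
  lipschitz4 F L -> continuity x -> continuity y -> (forall u, 0 <= u -> z0 u = z0 0) ->
  (forall u, z u = picard_step tau F z0 x y u) -> 0 < t -> is_derive z t (rhs_along tau F x y t).
Proof.
  intros HF Hx Hy H0 Hfix Ht.
  apply (is_derive_ext_loc (fun u => z0 0 + RInt (rhs_along tau F x y) 0 u)).
  - exists (mkposreal t Ht). intros u Hu. change (Rabs (u - t) < t) in Hu. apply Rabs_def2 in Hu.
    rewrite Hfix. unfold picard_step. rewrite (H0 u), Rmax_left by lra. reflexivity.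
  - rewrite <- (Rplus_0_l (rhs_along tau F x y t)).
    apply (is_derive_plus (fun _ => z0 0) (fun u => RInt (rhs_along tau F x y) 0 u));
      [exact (is_derive_const (z0 0) t) |
       apply is_derive_RInt_from_0; exact (continuity_rhs_along tau F L x y HF Hx Hy)].
Qed.

Definition clamp_history (tau t : R) : R := Rmax (- tau) (Rmin t 0).

Lemma clamp_history_in tau t : 0 <= tau -> - tau <= clamp_history tau t <= 0.
Proof. intros. unfold clamp_history, Rmax, Rmin. repeat destruct Rle_dec; lra. Qed.

Lemma clamp_history_id tau t : - tau <= t <= 0 -> clamp_history tau t = t.
Proof. intros. unfold clamp_history, Rmax, Rmin. repeat destruct Rle_dec; lra. Qed.

Lemma clamp_history_nonneg tau t : 0 <= tau -> 0 <= t -> clamp_history tau t = 0.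
Proof. intros. unfold clamp_history, Rmax, Rmin. repeat destruct Rle_dec; lra. Qed.

Lemma continuity_history tau f : 0 <= tau -> nonneg_cont_on tau f -> continuity (fun t => f (clamp_history tau t)).
Proof.
  intros Htau [Hc _] z e He.
  destruct (proj1 (filterlim_locally _ _) (Hc _ (clamp_history_in tau z Htau)) (mkposreal e He)) as [[d Hd] Hu].
  exists d. split; [exact Hd|]. intros u [_ Hu']. simpl in *. unfold R_dist in *.
  apply (Hu (clamp_history tau u)); [|apply clamp_history_in, Htau].
  change (Rabs (clamp_history tau u - clamp_history tau z) < d). eapply Rle_lt_trans; [|exact Hu'].
  unfold clamp_history, Rmax, Rmin. repeat destruct Rle_dec; unfold Rabs; repeat destruct Rcase_abs; lra.
Qed.

Lemma bounded_of_continuity_on f a b :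
  a <= b -> (forall u, a <= u <= b -> continuity_pt f u) ->
  exists K, 0 <= K /\ forall u, a <= u <= b -> Rabs (f u) <= K.
Proof.
  intros Hab Hc. destruct (continuity_ab_maj f a b Hab Hc) as [u1 [H1 _]].
  destruct (continuity_ab_min f a b Hab Hc) as [u2 [H2 _]].
  exists (Rabs (f u1) + Rabs (f u2)). pose proof (Rabs_pos (f u1)). pose proof (Rabs_pos (f u2)).
  split; [lra|]. intros u Hu. specialize (H1 u Hu). specialize (H2 u Hu).
  pose proof (Rle_abs (f u1)). pose proof (Rle_abs (- f u2)). rewrite Rabs_Ropp in *. apply Rabs_le. lra.
Qed.

Lemma nonneg_cont_on_bounded tau f :
  0 <= tau -> nonneg_cont_on tau f -> exists B, forall u, - tau <= u <= 0 -> 0 <= f u <= B.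
Proof.
  intros Htau Hf.
  destruct (bounded_of_continuity_on (fun t => f (clamp_history tau t)) (- tau) 0) as [B [_ HB]];
    [lra | intros; apply continuity_history; assumption |].
  exists B. intros u Hu. specialize (HB u Hu). rewrite clamp_history_id in HB by exact Hu.
  split; [apply (proj2 Hf u Hu) | eapply Rle_trans; [apply Rle_abs | exact HB]].
Qed.

(** * The truncated system *)

Definition clip (M v : R) : R := Rmax 0 (Rmin v M).

Lemma clip_nonexpansive M u v : 0 <= M -> Rabs (clip M u - clip M v) <= Rabs (u - v).
Proof.
  intros. unfold clip, Rmax, Rmin. repeat destruct Rle_dec; unfold Rabs; repeat destruct Rcase_abs; lra.
Qed.

Lemma clip_bounds M v : 0 <= M -> 0 <= clip M v <= M.
Proof. intros. unfold clip, Rmax, Rmin. repeat destruct Rle_dec; lra. Qed.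

Lemma clip_id M v : 0 <= v <= M -> clip M v = v.
Proof. intros. unfold clip, Rmax, Rmin. repeat destruct Rle_dec; lra. Qed.

Lemma clip_nonpos M v : 0 <= M -> v <= 0 -> clip M v = 0.
Proof. intros. unfold clip, Rmax, Rmin. repeat destruct Rle_dec; lra. Qed.

Lemma clip_le M v : 0 <= M -> 0 <= v -> clip M v <= v.
Proof. intros. unfold clip, Rmax, Rmin. repeat destruct Rle_dec; lra. Qed.

Lemma clip_ge_1 M v : 1 <= M -> 1 <= v -> 1 <= clip M v.
Proof. intros. unfold clip, Rmax, Rmin. repeat destruct Rle_dec; lra. Qed.

Definition prey_rhs (M : R) (a b c d : R) : R := clip M a * (1 - clip M a - clip M b).
Definition predator_rhs (s k M : R) (a b c d : R) : R := - s * b + k * clip M d * clip M c.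

Lemma lipschitz4_mono F L L' : L <= L' -> lipschitz4 F L -> lipschitz4 F L'.
Proof.
  intros HL HF a b c d a' b' c' d'. eapply Rle_trans; [apply HF|].
  apply Rmult_le_compat_r; [|exact HL].
  pose proof (Rabs_pos (a - a')). pose proof (Rabs_pos (b - b')). pose proof (Rabs_pos (c - c')).
  pose proof (Rabs_pos (d - d')). lra.
Qed.

Lemma prey_rhs_lipschitz M : 0 <= M -> lipschitz4 (prey_rhs M) (1 + 3 * M).
Proof.
  intros HM a b c d a' b' c' d'. unfold prey_rhs.
  pose proof (clip_nonexpansive M a a' HM). pose proof (clip_nonexpansive M b b' HM).
  pose proof (clip_bounds M a HM). pose proof (clip_bounds M a' HM). pose proof (clip_bounds M b HM).
  set (p := clip M a) in *. set (p' := clip M a') in *. set (q := clip M b) in *. set (q' := clip M b') in *.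
  replace (p * (1 - p - q) - p' * (1 - p' - q')) with ((p - p') * (1 - p - p' - q) - p' * (q - q')) by ring.
  eapply Rle_trans; [apply Rabs_triang|]. rewrite Rabs_Ropp, !Rabs_mult.
  assert (Rabs (1 - p - p' - q) <= 1 + 3 * M) by (apply Rabs_le; lra).
  assert (Rabs p' <= M) by (apply Rabs_le; lra).
  pose proof (Rabs_pos (p - p')). pose proof (Rabs_pos (q - q')). pose proof (Rabs_pos p').
  pose proof (Rabs_pos (1 - p - p' - q)). pose proof (Rabs_pos (c - c')). pose proof (Rabs_pos (d - d')).
  assert (Rabs (p - p') * Rabs (1 - p - p' - q) <= Rabs (a - a') * (1 + 3 * M)) by (apply Rmult_le_compat; lra).
  assert (Rabs p' * Rabs (q - q') <= M * Rabs (b - b')) by (apply Rmult_le_compat; lra).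
  pose proof (Rabs_pos (b - b')). nra.
Qed.

Lemma predator_rhs_lipschitz s k M : 0 <= s -> 0 <= k -> 0 <= M -> lipschitz4 (predator_rhs s k M) (s + k * M).
Proof.
  intros Hs Hk HM a b c d a' b' c' d'. unfold predator_rhs.
  pose proof (clip_nonexpansive M c c' HM). pose proof (clip_nonexpansive M d d' HM).
  pose proof (clip_bounds M c HM). pose proof (clip_bounds M d' HM).
  set (P := clip M c) in *. set (P' := clip M c') in *. set (Q := clip M d) in *. set (Q' := clip M d') in *.
  replace (- s * b + k * Q * P - (- s * b' + k * Q' * P'))
    with (- s * (b - b') + (k * P) * (Q - Q') + (k * Q') * (P - P')) by ring.
  eapply Rle_trans; [apply Rabs_triang|]. eapply Rle_trans; [apply Rplus_le_compat_r, Rabs_triang|].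
  rewrite !Rabs_mult, Rabs_Ropp, (Rabs_right s), (Rabs_right k), (Rabs_right P), (Rabs_right Q') by lra.
  pose proof (Rabs_pos (P - P')). pose proof (Rabs_pos (Q - Q')). pose proof (Rabs_pos (a - a')).
  pose proof (Rabs_pos (b - b')).
  pose proof (Rabs_pos (c - c')). pose proof (Rabs_pos (d - d')).
  assert (k * P * Rabs (Q - Q') <= k * M * Rabs (d - d')) by (apply Rmult_le_compat; nra).
  assert (k * Q' * Rabs (P - P') <= k * M * Rabs (c - c')) by (apply Rmult_le_compat; nra).
  assert (0 <= k * M) by nra. nra.
Qed.

Definition solution_behaviour (s Y tau : R) (phi psi x y : R -> R) : Prop :=
  (forall t, 0 <= t -> 0 <= x t /\ 0 <= y t)
  /\ (forall eps, 0 < eps -> exists T, forall t, T <= t -> x t <= 1 + eps)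
  /\ (forall eps, 0 < eps -> exists T, forall t, T <= t ->
        y t <= / (4 * s) * Y * exp (- s * tau) * (s + 1) ^ 2 + eps)
  /\ (in_X0 tau phi psi ->
        (forall t, 0 < t -> 0 < x t) /\ exists T, 0 <= T /\ forall t, T < t -> 0 < y t).

Section Truncated.

Variables (s Y tau B0 : R) (phi psi : R -> R).
Hypothesis hs : 0 < s.
Hypothesis hY : 0 < Y.
Hypothesis htau : 0 <= tau.
Hypothesis hphi : nonneg_cont_on tau phi.
Hypothesis hpsi : nonneg_cont_on tau psi.
Hypothesis hB : forall u, - tau <= u <= 0 -> phi u <= B0 /\ psi u <= B0.

Let k := Y * exp (- s * tau).
Let Bq := k * (1 + s) ^ 2 / 4.
(* A priori bounds: [x <= Kx]; [y <= K1] on [[0, tau]]; [k x (t - tau) + y t <= K2] for [t >= tau].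
   The clipping level [M] exceeds all of them. *)
Let Kx := Rmax 1 (phi 0).
Let K1 := Rmax (psi 0) (k * B0 * B0 / s).
Let K2 := Rmax (k * Kx + K1) (Bq / s).
Let M := Kx + K1 + K2 + B0 + 1.
Let Phi t := phi (clamp_history tau t).
Let Psi t := psi (clamp_history tau t).

Lemma k_pos : 0 < k.
Proof. unfold k. apply Rmult_lt_0_compat; [exact hY | apply exp_pos]. Qed.

Lemma Bq_max a : k * a * (1 + s - a) <= Bq.
Proof.
  unfold Bq. pose proof k_pos.
  assert (0 <= k * ((1 + s) / 2 - a) ^ 2) by (apply Rmult_le_pos; [lra | apply pow2_ge_0]). nra.
Qed.

Lemma history_bounds t : 0 <= Phi t <= B0 /\ 0 <= Psi t <= B0.
Proof.
  unfold Phi, Psi. pose proof (clamp_history_in tau t htau) as Ht.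
  destruct (hB _ Ht). split; split; try apply hphi; try apply hpsi; assumption.
Qed.

Lemma truncation_constants :
  0 <= B0 /\ 0 <= Bq /\ 1 <= Kx /\ phi 0 <= Kx /\ psi 0 <= K1 /\ k * B0 * B0 / s <= K1 /\
  k * Kx + K1 <= K2 /\ Bq / s <= K2 /\ Kx + 1 <= M /\ K1 <= M /\ K2 <= M /\ B0 <= M.
Proof.
  pose proof (history_bounds 0) as [[? ?] _]. pose proof (proj2 hpsi 0 ltac:(lra)). pose proof k_pos.
  assert (0 <= Bq) by (unfold Bq; pose proof (pow2_ge_0 (1 + s)); nra).
  assert (1 <= Kx /\ phi 0 <= Kx) as [? ?] by (split; [apply Rmax_l | apply Rmax_r]).
  assert (psi 0 <= K1 /\ k * B0 * B0 / s <= K1) as [? ?] by (split; [apply Rmax_l | apply Rmax_r]).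
  assert (k * Kx + K1 <= K2 /\ Bq / s <= K2) as [? ?] by (split; [apply Rmax_l | apply Rmax_r]).
  assert (0 <= k * Kx) by nra.
  unfold M. repeat split; lra.
Qed.

Lemma M_nonneg : 0 <= M.
Proof. pose proof truncation_constants. lra. Qed.

Section FixedPoint.

Variables x y : R -> R.
Hypothesis hx : continuity x.
Hypothesis hy : continuity y.
Hypothesis hfix : forall t,
  x t = picard_step tau (prey_rhs M) Phi x y t /\ y t = picard_step tau (predator_rhs s k M) Psi x y t.

Lemma fixed_history t : t <= 0 -> x t = Phi t /\ y t = Psi t.
Proof.
  intros Ht. destruct (hfix t) as [-> ->]. rewrite !picard_step_nonpos by exact Ht. split; reflexivity.
Qed.

Lemma fixed_initial t : - tau <= t <= 0 -> x t = phi t /\ y t = psi t.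
Proof.
  intros Ht. destruct (fixed_history t (proj2 Ht)) as [-> ->]. unfold Phi, Psi.
  rewrite clamp_history_id by exact Ht. split; reflexivity.
Qed.

Lemma is_derive_fixed_x t : 0 < t -> is_derive x t (prey_rhs M (x t) (y t) (x (t - tau)) (y (t - tau))).
Proof.
  apply (is_derive_picard_fixed tau (prey_rhs M) (1 + 3 * M) Phi x x y t (prey_rhs_lipschitz M M_nonneg) hx hy).
  - intros u Hu. unfold Phi. rewrite !clamp_history_nonneg by lra. reflexivity.
  - intros u. apply hfix.
Qed.

Lemma is_derive_fixed_y t :
  0 < t -> is_derive y t (predator_rhs s k M (x t) (y t) (x (t - tau)) (y (t - tau))).
Proof.
  pose proof k_pos.
  apply (is_derive_picard_fixed tau (predator_rhs s k M) (s + k * M) Psi y x y t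
           (predator_rhs_lipschitz s k M ltac:(lra) ltac:(lra) M_nonneg) hx hy).
  - intros u Hu. unfold Psi. rewrite !clamp_history_nonneg by lra. reflexivity.
  - intros u. apply hfix.
Qed.

Lemma fixed_x_nonneg t : 0 <= t -> 0 <= x t.
Proof.
  intros Ht. cut (- x t <= 0); [lra|]. pose proof M_nonneg.
  apply (le_of_deriv_nonpos_above (fun u => - x u)
           (fun u => - prey_rhs M (x u) (y u) (x (u - tau)) (y (u - tau))) 0 t 0);
    [apply (continuity_at_right (fun u => - x u)), continuity_opp, hx | | | | lra].
  - intros u Hu. apply (is_derive_opp x), is_derive_fixed_x. lra.
  - rewrite (proj1 (fixed_initial 0 ltac:(lra))). pose proof (proj2 hphi 0 ltac:(lra)). lra.
  - intros u _ Hneg. unfold prey_rhs. rewrite clip_nonpos by lra. lra.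
Qed.

Lemma fixed_y_nonneg t : 0 <= t -> 0 <= y t.
Proof.
  intros Ht. cut (- y t <= 0); [lra|]. pose proof M_nonneg. pose proof k_pos.
  apply (le_of_deriv_nonpos_above (fun u => - y u)
           (fun u => - predator_rhs s k M (x u) (y u) (x (u - tau)) (y (u - tau))) 0 t 0);
    [apply (continuity_at_right (fun u => - y u)), continuity_opp, hy | | | | lra].
  - intros u Hu. apply (is_derive_opp y), is_derive_fixed_y. lra.
  - rewrite (proj2 (fixed_initial 0 ltac:(lra))). pose proof (proj2 hpsi 0 ltac:(lra)). lra.
  - intros u _ Hneg. unfold predator_rhs.
    pose proof (clip_bounds M (x (u - tau)) M_nonneg). pose proof (clip_bounds M (y (u - tau)) M_nonneg).
    assert (0 <= k * clip M (y (u - tau)) * clip M (x (u - tau))) by (apply Rmult_le_pos; [apply Rmult_le_pos|]; lra).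
    nra.
Qed.

Lemma fixed_x_le t : 0 <= t -> x t <= Kx.
Proof.
  intros Ht. pose proof truncation_constants. pose proof M_nonneg.
  apply (le_of_deriv_nonpos_above x (fun u => prey_rhs M (x u) (y u) (x (u - tau)) (y (u - tau))) 0 t Kx);
    [apply continuity_at_right, hx | intros u Hu; apply is_derive_fixed_x; lra | | | lra].
  - rewrite (proj1 (fixed_initial 0 ltac:(lra))). lra.
  - intros u _ Habove. unfold prey_rhs.
    pose proof (clip_ge_1 M (x u) ltac:(lra) ltac:(lra)). pose proof (clip_bounds M (y u) M_nonneg). nra.
Qed.

Lemma fixed_y_le_early t : 0 <= t <= tau -> y t <= K1.
Proof.
  intros Ht. pose proof truncation_constants. pose proof M_nonneg. pose proof k_pos.
  apply (le_of_deriv_nonpos_above y (fun u => predator_rhs s k M (x u) (y u) (x (u - tau)) (y (u - tau))) 0 tau K1);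
    [apply continuity_at_right, hy | intros u Hu; apply is_derive_fixed_y; lra | | | lra].
  - rewrite (proj2 (fixed_initial 0 ltac:(lra))). lra.
  - intros u Hu Habove. unfold predator_rhs.
    destruct (fixed_history (u - tau) ltac:(lra)) as [-> ->]. destruct (history_bounds (u - tau)) as [HP HQ].
    pose proof (clip_le M (Phi (u - tau)) M_nonneg ltac:(lra)).
    pose proof (clip_bounds M (Phi (u - tau)) M_nonneg).
    pose proof (clip_le M (Psi (u - tau)) M_nonneg ltac:(lra)).
    pose proof (clip_bounds M (Psi (u - tau)) M_nonneg).
    assert (clip M (Psi (u - tau)) * clip M (Phi (u - tau)) <= B0 * B0) by (apply Rmult_le_compat; lra).
    assert (s * (k * B0 * B0 / s) = k * B0 * B0) by (field; lra).
    assert (s * (k * B0 * B0 / s) < s * y u) by (apply Rmult_lt_compat_l; lra).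
    nra.
Qed.

Lemma fixed_weighted_le t : tau <= t -> k * x (t - tau) + y t <= K2.
Proof.
  intros Ht. pose proof truncation_constants. pose proof M_nonneg. pose proof k_pos.
  apply (le_of_deriv_nonpos_above (fun u => k * x (u - tau) + y u)
           (fun u => k * prey_rhs M (x (u - tau)) (y (u - tau)) (x (u - tau - tau)) (y (u - tau - tau))
                     + predator_rhs s k M (x u) (y u) (x (u - tau)) (y (u - tau))) tau t K2);
    [ | | | | lra].
  - apply (continuity_at_right (fun u => k * x (u - tau) + y u)), continuity_plus; [|exact hy].
    apply continuity_scal, continuity_shift, hx.
  - intros u Hu. apply (is_derive_plus (fun u => k * x (u - tau)) y); [|apply is_derive_fixed_y; lra].
    apply (is_derive_scal (fun u => x (u - tau))), is_derive_shift, is_derive_fixed_x. lra.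
  - rewrite Rminus_eq_0, (proj1 (fixed_initial 0 ltac:(lra))). pose proof (fixed_y_le_early tau ltac:(lra)).
    assert (k * phi 0 <= k * Kx) by (apply Rmult_le_compat_l; lra). lra.
  - intros u Hu Habove. unfold prey_rhs, predator_rhs.
    pose proof (fixed_x_nonneg (u - tau) ltac:(lra)). pose proof (fixed_x_le (u - tau) ltac:(lra)).
    set (a := x (u - tau)) in *. rewrite (clip_id M a) by lra.
    pose proof (clip_bounds M (y (u - tau)) M_nonneg).
    pose proof (Bq_max a).
    assert (s * (Bq / s) = Bq) by (field; lra).
    assert (s * (Bq / s) < s * (k * a + y u)) by (apply Rmult_lt_compat_l; lra).
    nra.
Qed.

Lemma fixed_bounds u : (0 <= x u <= M) /\ (0 <= y u <= M).
Proof.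
  pose proof truncation_constants. pose proof k_pos.
  destruct (Rle_or_lt u 0) as [Hu|Hu].
  - destruct (fixed_history u Hu) as [-> ->]. pose proof (history_bounds u). lra.
  - pose proof (fixed_x_nonneg u ltac:(lra)). pose proof (fixed_x_le u ltac:(lra)).
    pose proof (fixed_y_nonneg u ltac:(lra)).
    destruct (Rle_or_lt u tau) as [Hut|Hut]; [pose proof (fixed_y_le_early u ltac:(lra)); lra|].
    pose proof (fixed_weighted_le u ltac:(lra)). pose proof (fixed_x_nonneg (u - tau) ltac:(lra)).
    assert (0 <= k * x (u - tau)) by nra. lra.
Qed.

Lemma is_derive_fixed_x_untruncated t : 0 < t -> is_derive x t (x t * (1 - x t) - y t * x t).
Proof.
  intros Ht. replace (x t * (1 - x t) - y t * x t) with (prey_rhs M (x t) (y t) (x (t - tau)) (y (t - tau))).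
  - apply is_derive_fixed_x, Ht.
  - destruct (fixed_bounds t) as [? ?]. unfold prey_rhs. rewrite !clip_id by assumption. ring.
Qed.

Lemma is_derive_fixed_y_untruncated t :
  0 < t -> is_derive y t (- s * y t + Y * exp (- s * tau) * y (t - tau) * x (t - tau)).
Proof.
  intros Ht. replace (- s * y t + Y * exp (- s * tau) * y (t - tau) * x (t - tau))
    with (predator_rhs s k M (x t) (y t) (x (t - tau)) (y (t - tau))).
  - apply is_derive_fixed_y, Ht.
  - destruct (fixed_bounds (t - tau)) as [? ?]. unfold predator_rhs. rewrite !clip_id by assumption.
    reflexivity.
Qed.

Lemma fixed_is_solution : is_solution s Y tau phi psi x y.
Proof.
  split; [exact fixed_initial|]. split; [apply continuity_at_right, hx|].
  split; [apply continuity_at_right, hy|].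
  intros t Ht. split; [apply is_derive_fixed_x_untruncated | apply is_derive_fixed_y_untruncated]; exact Ht.
Qed.

Lemma fixed_x_limsup eps : 0 < eps -> exists T, forall t, T <= t -> x t <= 1 + eps.
Proof.
  apply (eventually_le_of_deriv_decay x (fun u => x u * (1 - x u) - y u * x u) 0 1 1);
    [lra | apply continuity_at_right, hx | apply is_derive_fixed_x_untruncated |].
  intros t Ht. destruct (fixed_bounds t) as [? ?]. assert (0 <= y t * x t) by nra.
  pose proof (Rle_0_sqr (x t - 1)). unfold Rsqr in *. lra.
Qed.

Lemma fixed_y_limsup eps : 0 < eps -> exists T, forall t, T <= t -> y t <= Bq / s + eps.
Proof.
  intros He. pose proof k_pos.
  destruct (eventually_le_of_deriv_decay (fun u => k * x (u - tau) + y u)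
    (fun u => k * (x (u - tau) * (1 - x (u - tau)) - y (u - tau) * x (u - tau))
              + (- s * y u + Y * exp (- s * tau) * y (u - tau) * x (u - tau))) tau (Bq / s) s) with (eps := eps)
    as [T HT]; [exact hs | | | | exact He |].
  - apply (continuity_at_right (fun u => k * x (u - tau) + y u)), continuity_plus; [|exact hy].
    apply continuity_scal, continuity_shift, hx.
  - intros u Hu.
    apply (is_derive_plus (fun u => k * x (u - tau)) y); [|apply is_derive_fixed_y_untruncated; lra].
    apply (is_derive_scal (fun u => x (u - tau))), is_derive_shift, is_derive_fixed_x_untruncated. lra.
  - intros u Hu. fold k. set (a := x (u - tau)).
    pose proof (Bq_max a).
    assert (s * (Bq / s) = Bq) by (field; lra). nra.
  - exists (Rmax T tau). intros t Ht. pose proof (Rmax_l T tau). pose proof (Rmax_r T tau).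
    specialize (HT t ltac:(lra)). destruct (fixed_bounds (t - tau)) as [? _].
    assert (0 <= k * x (t - tau)) by nra. lra.
Qed.

Lemma fixed_x_pos : phi 0 > 0 -> forall t, 0 < t -> 0 < x t.
Proof.
  intros Hp t Ht. pose proof M_nonneg.
  apply (pos_of_deriv_ge x (fun u => x u * (1 - x u) - y u * x u) 0 t (2 * M));
    [lra | apply continuity_at_right, hx | | | | lra].
  - intros u Hu. apply is_derive_fixed_x_untruncated. lra.
  - rewrite (proj1 (fixed_initial 0 ltac:(lra))). exact Hp.
  - intros u _ Hpos. destruct (fixed_bounds u) as [? ?]. nra.
Qed.

(* The delayed product [y (t - tau) x (t - tau)] is positive near [th + tau], and at a zero of [y]
   it makes [y] increase. *)
Lemma fixed_y_somewhere_pos th : - tau <= th <= 0 -> phi th * psi th > 0 -> exists t2, 0 < t2 /\ 0 < y t2.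
Proof.
  intros Hth Hp. pose proof k_pos.
  set (p := fun u => y (u - tau) * x (u - tau)).
  assert (Hp0 : 0 < p (th + tau)).
  { unfold p. replace (th + tau - tau) with th by ring. destruct (fixed_initial th Hth) as [-> ->]. lra. }
  destruct (continuity_pt_eps_delta p (th + tau)
              (continuity_mult _ _ (continuity_shift y tau hy) (continuity_shift x tau hx) _) _ Hp0) as [d [Hd Hu]].
  set (ta := th + tau + d / 2).
  assert (Hpa : 0 < p ta).
  { specialize (Hu ta ltac:(unfold ta; rewrite Rabs_right; lra)). apply Rabs_def2 in Hu. lra. }
  destruct (Rle_lt_or_eq_dec 0 (y ta) (fixed_y_nonneg ta ltac:(unfold ta; lra))) as [Hy|Hy].
  - exists ta. split; [unfold ta; lra | exact Hy].
  - pose proof (is_derive_fixed_y_untruncated ta ltac:(unfold ta; lra)) as D. rewrite <- Hy in D.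
    destruct (is_derive_pos_exists_gt_right y ta _ 1 D) as [u [Hu1 Hu2]]; [unfold p in Hpa; fold k; nra | lra |].
    exists u. split; [unfold ta in *; lra | lra].
Qed.

Lemma fixed_y_eventually_pos th :
  - tau <= th <= 0 -> phi th * psi th > 0 -> exists T, 0 <= T /\ forall t, T < t -> 0 < y t.
Proof.
  intros Hth Hp. destruct (fixed_y_somewhere_pos th Hth Hp) as [t2 [Ht2 Hy2]].
  exists t2. split; [lra|]. intros t Ht.
  apply (pos_of_deriv_ge y (fun u => - s * y u + Y * exp (- s * tau) * y (u - tau) * x (u - tau)) t2 t s);
    [lra | apply continuity_at_right, hy | | exact Hy2 | | lra].
  - intros u Hu. apply is_derive_fixed_y_untruncated. lra.
  - intros u Hu _. destruct (fixed_bounds (u - tau)) as [? ?]. pose proof k_pos. fold k.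
    assert (0 <= k * y (u - tau) * x (u - tau)) by (apply Rmult_le_pos; [apply Rmult_le_pos|]; lra). lra.
Qed.

Lemma fixed_behaviour : solution_behaviour s Y tau phi psi x y.
Proof.
  split; [intros t Ht; split; [apply fixed_x_nonneg | apply fixed_y_nonneg]; exact Ht|].
  split; [exact fixed_x_limsup|]. split.
  - intros eps He. destruct (fixed_y_limsup eps He) as [T HT]. exists T. intros t Ht.
    replace (/ (4 * s) * Y * exp (- s * tau) * (s + 1) ^ 2) with (Bq / s) by (unfold Bq, k; field; lra).
    apply HT, Ht.
  - intros [Hp0 [th [Hth Hp]]]. split; [apply fixed_x_pos, Hp0 | apply (fixed_y_eventually_pos th Hth Hp)].
Qed.

End FixedPoint.

Lemma truncated_solution :
  exists x y, is_solution s Y tau phi psi x y /\ solution_behaviour s Y tau phi psi x y.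
Proof.
  pose proof truncation_constants. pose proof k_pos. pose proof M_nonneg.
  destruct (picard_fixed_point tau (1 + 3 * M + (s + k * M)) (M * (1 + 2 * M) + (s * B0 + k * M * M))
              (prey_rhs M) (predator_rhs s k M) Phi Psi) as [x [y [Hx [Hy Hfix]]]].
  - exact htau.
  - nra.
  - apply (lipschitz4_mono _ (1 + 3 * M)); [nra | apply prey_rhs_lipschitz; lra].
  - apply (lipschitz4_mono _ (s + k * M)); [lra | apply predator_rhs_lipschitz; lra].
  - apply continuity_history; assumption.
  - apply continuity_history; assumption.
  - intros u. unfold rhs_along, prey_rhs, predator_rhs. destruct (history_bounds u) as [_ [? ?]].
    pose proof (clip_bounds M (Phi u) M_nonneg). pose proof (clip_bounds M (Psi u) M_nonneg).
    pose proof (clip_bounds M (Phi (u - tau)) M_nonneg). pose proof (clip_bounds M (Psi (u - tau)) M_nonneg).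
    apply Rplus_le_compat.
    + rewrite Rabs_mult. apply Rmult_le_compat; try apply Rabs_pos; apply Rabs_le; lra.
    + assert (0 <= clip M (Psi (u - tau)) * clip M (Phi (u - tau)) <= M * M)
        by (split; [apply Rmult_le_pos | apply Rmult_le_compat]; lra).
      assert (0 <= s * Psi u <= s * B0) by (split; [apply Rmult_le_pos | apply Rmult_le_compat_l]; lra).
      apply Rabs_le. split; nra.
  - exists x, y. split; [apply fixed_is_solution | apply fixed_behaviour]; assumption.
Qed.

End Truncated.

Lemma solution_exists s Y tau phi psi :
  0 < s -> 0 < Y -> 0 <= tau -> nonneg_cont_on tau phi -> nonneg_cont_on tau psi ->
  exists x y, is_solution s Y tau phi psi x y /\ solution_behaviour s Y tau phi psi x y.
Proof.
  intros Hs HY Htau Hphi Hpsi.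
  destruct (nonneg_cont_on_bounded tau phi Htau Hphi) as [B1 HB1].
  destruct (nonneg_cont_on_bounded tau psi Htau Hpsi) as [B2 HB2].
  apply (truncated_solution s Y tau (Rmax B1 B2)); try assumption.
  intros u Hu. pose proof (Rmax_l B1 B2). pose proof (Rmax_r B1 B2).
  specialize (HB1 u Hu). specialize (HB2 u Hu). lra.
Qed.

(** * Uniqueness *)

Lemma continuity_pt_max_of_solution f df :
  filterlim f (at_right 0) (locally (f 0)) -> (forall t, 0 < t -> is_derive f t (df t)) ->
  forall u, 0 <= u -> continuity_pt (fun v => f (Rmax v 0)) u.
Proof.
  intros Hr Hd u Hu. destruct (Req_dec u 0) as [->|Hne]; [apply at_right_iff_continuity_pt_max, Hr|].
  apply (continuity_pt_comp (fun v => Rmax v 0) f); [apply continuity_Rmax_0|].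
  rewrite Rmax_left by lra. apply (is_derive_continuity_pt _ _ _ (Hd u ltac:(lra))).
Qed.

Lemma solution_bounded s Y tau phi psi x y b :
  0 <= tau -> nonneg_cont_on tau phi -> nonneg_cont_on tau psi -> is_solution s Y tau phi psi x y -> 0 <= b ->
  exists K, 0 <= K /\ forall u, - tau <= u <= b -> Rabs (x u) <= K /\ Rabs (y u) <= K.
Proof.
  intros Htau Hphi Hpsi [Hinit [Hrx [Hry Hd]]] Hb.
  destruct (nonneg_cont_on_bounded tau phi Htau Hphi) as [B1 HB1].
  destruct (nonneg_cont_on_bounded tau psi Htau Hpsi) as [B2 HB2].
  destruct (bounded_of_continuity_on (fun v => x (Rmax v 0)) 0 b Hb) as [Kx [HKx Bx]].
  { intros u Hu. exact (continuity_pt_max_of_solution x _ Hrx (fun t Ht => proj1 (Hd t Ht)) u (proj1 Hu)). }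
  destruct (bounded_of_continuity_on (fun v => y (Rmax v 0)) 0 b Hb) as [Ky [HKy By]].
  { intros u Hu. exact (continuity_pt_max_of_solution y _ Hry (fun t Ht => proj2 (Hd t Ht)) u (proj1 Hu)). }
  pose proof (HB1 0 ltac:(lra)). pose proof (HB2 0 ltac:(lra)).
  exists (B1 + B2 + Kx + Ky). split; [lra|]. intros u Hu.
  destruct (Rle_or_lt u 0) as [Hu0|Hu0].
  - destruct (Hinit u ltac:(lra)) as [-> ->]. specialize (HB1 u ltac:(lra)). specialize (HB2 u ltac:(lra)).
    rewrite !Rabs_right by lra. lra.
  - specialize (Bx u ltac:(lra)). specialize (By u ltac:(lra)). rewrite Rmax_left in Bx, By by lra. lra.
Qed.

(* The differences of the right-hand sides are linear in the differences of the arguments, with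
   coefficients bounded by [K]; cross terms are absorbed by [2 X p q <= K (p^2 + q^2)] for [|X| <= K]. *)
Lemma delay_energy_ineq s k K a a' b b' c c' d d' :
  0 < s -> 0 <= k -> 0 <= K ->
  Rabs a <= K -> Rabs a' <= K -> Rabs b <= K -> Rabs c <= K -> Rabs d' <= K ->
  2 * (a - a') * ((a * (1 - a) - b * a) - (a' * (1 - a') - b' * a'))
  + 2 * (b - b') * ((- s * b + k * d * c) - (- s * b' + k * d' * c'))
  <= (2 + 7 * K + 2 * k * K) * ((a - a') * (a - a') + (b - b') * (b - b'))
     + k * K * ((c - c') * (c - c') + (d - d') * (d - d')).
Proof.
  intros Hs Hk HK Ha Ha' Hb Hc Hd'.
  set (u := a - a'). set (v := b - b'). set (w := c - c'). set (z := d - d').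
  replace ((a * (1 - a) - b * a) - (a' * (1 - a') - b' * a')) with (u * (1 - a - a' - b) - a' * v)
    by (unfold u, v; ring).
  replace ((- s * b + k * d * c) - (- s * b' + k * d' * c')) with (- s * v + k * (c * z + d' * w))
    by (unfold v, w, z; ring).
  rewrite Rabs_le_between in Ha, Ha', Hb, Hc, Hd'.
  assert (Hsq : forall X p q, - K <= X <= K -> 2 * X * p * q <= K * (p * p + q * q)).
  { intros X p q HX.
    assert (0 <= (K - X) * ((p + q) * (p + q))) by (apply Rmult_le_pos; [lra | apply Rle_0_sqr]).
    assert (0 <= (K + X) * ((p - q) * (p - q))) by (apply Rmult_le_pos; [lra | apply Rle_0_sqr]). nra. }
  pose proof (Hsq (- a') u v ltac:(lra)). pose proof (Hsq c v z Hc). pose proof (Hsq d' v w Hd').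
  assert (k * (2 * c * v * z) <= k * (K * (v * v + z * z))) by (apply Rmult_le_compat_l; auto).
  assert (k * (2 * d' * v * w) <= k * (K * (v * v + w * w))) by (apply Rmult_le_compat_l; auto).
  assert (u * u * (1 - a - a' - b) <= u * u * (1 + 3 * K)) by (apply Rmult_le_compat_l; [apply Rle_0_sqr | lra]).
  pose proof (Rle_0_sqr u). pose proof (Rle_0_sqr v). unfold Rsqr in *.
  assert (0 <= s * (v * v)) by nra. assert (0 <= k * K * (u * u)) by (apply Rmult_le_pos; [nra | lra]).
  assert (0 <= k * K * (v * v)) by (apply Rmult_le_pos; [nra | lra]). assert (0 <= K * (v * v)) by nra.
  nra.
Qed.

Lemma is_derive_sq_diff (f g : R -> R) t df dg :
  is_derive f t df -> is_derive g t dg ->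
  is_derive (fun u => (f u - g u) * (f u - g u)) t (2 * (f t - g t) * (df - dg)).
Proof.
  intros Hf Hg.
  replace (2 * (f t - g t) * (df - dg)) with ((df - dg) * (f t - g t) + (f t - g t) * (df - dg)) by ring.
  apply (is_derive_mult (fun u => f u - g u) (fun u => f u - g u)); [| |intros; apply Rmult_comm];
    apply (is_derive_minus f g); assumption.
Qed.

Definition sq_gap (x1 y1 x2 y2 : R -> R) (u : R) : R :=
  (x1 u - x2 u) * (x1 u - x2 u) + (y1 u - y2 u) * (y1 u - y2 u).

Lemma sq_gap_at_right x1 y1 x2 y2 :
  filterlim x1 (at_right 0) (locally (x1 0)) -> filterlim y1 (at_right 0) (locally (y1 0)) ->
  filterlim x2 (at_right 0) (locally (x2 0)) -> filterlim y2 (at_right 0) (locally (y2 0)) ->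
  filterlim (sq_gap x1 y1 x2 y2) (at_right 0) (locally (sq_gap x1 y1 x2 y2 0)).
Proof.
  rewrite !at_right_iff_continuity_pt_max. intros. unfold sq_gap.
  apply continuity_pt_plus; apply continuity_pt_mult; apply continuity_pt_minus; assumption.
Qed.

Lemma solution_unique s Y tau phi psi x1 y1 x2 y2 :
  0 < s -> 0 < Y -> 0 <= tau -> nonneg_cont_on tau phi -> nonneg_cont_on tau psi ->
  is_solution s Y tau phi psi x1 y1 -> is_solution s Y tau phi psi x2 y2 ->
  forall t, - tau <= t -> x1 t = x2 t /\ y1 t = y2 t.
Proof.
  intros Hs HY Htau Hphi Hpsi H1 H2 t Ht.
  pose proof H1 as [Hi1 [Hrx1 [Hry1 Hd1]]]. pose proof H2 as [Hi2 [Hrx2 [Hry2 Hd2]]].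
  assert (Hinit : forall u, - tau <= u <= 0 -> x1 u = x2 u /\ y1 u = y2 u).
  { intros u Hu. destruct (Hi1 u Hu) as [-> ->]. destruct (Hi2 u Hu) as [-> ->]. split; reflexivity. }
  destruct (Rle_or_lt t 0) as [Ht0|Ht0]; [apply Hinit; lra|].
  destruct (solution_bounded s Y tau phi psi x1 y1 t Htau Hphi Hpsi H1 ltac:(lra)) as [K1 [HK1 B1]].
  destruct (solution_bounded s Y tau phi psi x2 y2 t Htau Hphi Hpsi H2 ltac:(lra)) as [K2 [HK2 B2]].
  set (K := K1 + K2). set (k := Y * exp (- s * tau)).
  assert (Hk : 0 < k) by (apply Rmult_lt_0_compat; [exact HY | apply exp_pos]).
  set (dx := fun (x y : R -> R) u => x u * (1 - x u) - y u * x u).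
  set (dy := fun (x y : R -> R) u => - s * y u + k * y (u - tau) * x (u - tau)).
  assert (He : sq_gap x1 y1 x2 y2 t = 0).
  { apply (delay_gronwall_zero (sq_gap x1 y1 x2 y2)
      (fun u => 2 * (x1 u - x2 u) * (dx x1 y1 u - dx x2 y2 u) + 2 * (y1 u - y2 u) * (dy x1 y1 u - dy x2 y2 u))
      0 t tau (2 + 7 * K + 2 * k * K) (k * K)); [exact Htau | unfold K; nra | unfold K; nra | | | | | | lra].
    - apply sq_gap_at_right; assumption.
    - intros u Hu. destruct (Hd1 u ltac:(lra)) as [Dx1 Dy1]. destruct (Hd2 u ltac:(lra)) as [Dx2 Dy2].
      apply (is_derive_plus (fun v => (x1 v - x2 v) * (x1 v - x2 v)) (fun v => (y1 v - y2 v) * (y1 v - y2 v)));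
        apply is_derive_sq_diff; assumption.
    - intros u Hu. unfold sq_gap. destruct (Hinit u ltac:(lra)) as [-> ->]. ring.
    - intros u _. unfold sq_gap. pose proof (Rle_0_sqr (x1 u - x2 u)). pose proof (Rle_0_sqr (y1 u - y2 u)).
      unfold Rsqr in *. lra.
    - intros u Hu. destruct (B1 u ltac:(lra)). destruct (B2 u ltac:(lra)).
      destruct (B1 (u - tau) ltac:(lra)). destruct (B2 (u - tau) ltac:(lra)).
      apply (delay_energy_ineq s k K (x1 u) (x2 u) (y1 u) (y2 u)
               (x1 (u - tau)) (x2 (u - tau)) (y1 (u - tau)) (y2 (u - tau)));
        unfold K; lra. }
  unfold sq_gap in He. pose proof (Rle_0_sqr (x1 t - x2 t)). pose proof (Rle_0_sqr (y1 t - y2 t)).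
  unfold Rsqr in *.
  split; apply Rminus_diag_uniq; nra.
Qed.

Lemma solution_behaviour_congr s Y tau phi psi x y x' y' :
  0 <= tau -> (forall t, - tau <= t -> x t = x' t /\ y t = y' t) ->
  solution_behaviour s Y tau phi psi x' y' -> solution_behaviour s Y tau phi psi x y.
Proof.
  intros Htau E [Hnn [Hlx [Hly Hpos]]].
  assert (Ex : forall t, 0 <= t -> x t = x' t) by (intros t Ht; apply E; lra).
  assert (Ey : forall t, 0 <= t -> y t = y' t) by (intros t Ht; apply E; lra).
  split; [|split; [|split]].
  - intros t Ht. rewrite Ex, Ey by exact Ht. apply Hnn, Ht.
  - intros eps He. destruct (Hlx eps He) as [T HT]. exists (Rmax T 0). intros t Ht.
    pose proof (Rmax_l T 0). pose proof (Rmax_r T 0). rewrite Ex by lra. apply HT. lra.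
  - intros eps He. destruct (Hly eps He) as [T HT]. exists (Rmax T 0). intros t Ht.
    pose proof (Rmax_l T 0). pose proof (Rmax_r T 0). rewrite Ey by lra. apply HT. lra.
  - intros H0. destruct (Hpos H0) as [Hx [T [HT Hy]]]. split.
    + intros t Ht. rewrite Ex by lra. apply Hx, Ht.
    + exists T. split; [exact HT|]. intros t Ht. rewrite Ey by lra. apply Hy, Ht.
Qed.

Theorem proposition2p1 (s Y tau : R) (hs : 0 < s) (hY : 0 < Y) (htau : 0 <= tau)
  (phi psi : R -> R) (hphi : nonneg_cont_on tau phi) (hpsi : nonneg_cont_on tau psi) :
  (* 1. existence, uniqueness *)
  (exists x y : R -> R, is_solution s Y tau phi psi x y)
  /\ (forall x1 y1 x2 y2 : R -> R,
        is_solution s Y tau phi psi x1 y1 -> is_solution s Y tau phi psi x2 y2 ->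
        forall t, -tau <= t -> x1 t = x2 t /\ y1 t = y2 t)
  /\ (forall x y : R -> R, is_solution s Y tau phi psi x y ->
        (* 1. nonnegativity *)
        (forall t, 0 <= t -> 0 <= x t /\ 0 <= y t)
        (* 2. limsup x <= 1 *)
        /\ (forall eps, 0 < eps -> exists T, forall t, T <= t -> x t <= 1 + eps)
        (* 2. limsup y <= Y e^{-s tau} (s+1)^2 / (4 s) *)
        /\ (forall eps, 0 < eps -> exists T, forall t, T <= t ->
              y t <= / (4 * s) * Y * exp (- s * tau) * (s + 1) ^ 2 + eps)
        (* 3. persistence of positivity for data in X^0 *)
        /\ (in_X0 tau phi psi ->
              (forall t, 0 < t -> 0 < x t)
              /\ exists T, 0 <= T /\ forall t, T < t -> 0 < y t)).
Proof.
  pose proof (solution_unique s Y tau phi psi) as Hunique.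
  destruct (solution_exists s Y tau phi psi hs hY htau hphi hpsi) as [x0 [y0 [Hsol0 Hbeh0]]].
  split; [exists x0, y0; exact Hsol0|]. split.
  - intros x1 y1 x2 y2 H1 H2. exact (Hunique x1 y1 x2 y2 hs hY htau hphi hpsi H1 H2).
  - intros x y Hsol. apply (solution_behaviour_congr s Y tau phi psi x y x0 y0 htau); [|exact Hbeh0].
    exact (Hunique x y x0 y0 hs hY htau hphi hpsi Hsol Hsol0).
Qed.
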